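(* Let $G$ be a $k$-uniform $s$-cycle with $k\ge 3$ and $\frac{k}{2}<s<k-1$, and write $k=q(k-s)+r$ with integers $q$ and $1\le r<k-s$. Then $\lambda(\mathcal{Q})=q+1+(q+1)\alpha_*^{k-(q+1)r}$, where $\alpha_*$ is the unique root in $(0,1)$ of $(q+1)\alpha^k+\alpha^{(q+1)r}-q=0$. When $k$ is even, also $\lambda(\mathcal{L})=q+1+(q+1)\alpha_*^{k-(q+1)r}$.
   Context: A $k$-uniform $s$-cycle with $m$ edges has vertex set $\mathbb{Z}_n$, $n=m(k-s)$ (vertex $n+i$ identified with $i$), and edges $e_j=\{j(k-s)+1,\ldots,j(k-s)+k\}$, $j=0,\ldots,m-1$; it is assumed that $n\ge 2k-s$. The degree $d_i$ of a vertex is the number of edges containing it. For a real tensor $\mathcal{T}$ of order $k$ and dimension $n$, $\lambda\in\mathbb{R}$ is an H-eigenvalue if there is nonzero $\mathbf{x}\in\mathbb{R}^n$ with $(\mathcal{T}\mathbf{x}^{k-1})_i=\lambda x_i^{k-1}$ for all $i$, where $(\mathcal{T}\mathbf{x}^{k-1})_i=\sum_{i_2,\ldots,i_k}t_{ii_2\ldots i_k}x_{i_2}\cdots x_{i_k}$; $\lambda(\mathcal{T})$ is the largest H-eigenvalue. The adjacency tensor $\mathcal{A}$ has entries $1/(k-1)!$ at $(i_1,\ldots,i_k)$ with $\{i_1,\ldots,i_k\}$ an edge and $0$ otherwise; $\mathcal{D}$ is diagonal with entries $d_i$; $\mathcal{L}=\mathcal{D}-\mathcal{A}$, $\mathcal{Q}=\mathcal{D}+\mathcal{A}$.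 *)

From HB Require Import structures.
From mathcomp Require Import all_boot all_order all_algebra.
From mathcomp Require Import reals.
Set Implicit Arguments. Unset Strict Implicit. Unset Printing Implicit Defensive.
Import Order.TTheory GRing.Theory Num.Theory.
Local Open Scope ring_scope.

(* A real tensor of order k and dimension n: entry t_{i i_2 ... i_k} is
   [T i g] where g : 'I_(k-1) -> 'I_n lists the indices i_2,...,i_k. *)
Definition tensor (R : Type) (k n : nat) := 'I_n -> {ffun 'I_k.-1 -> 'I_n} -> R.

Definition tapp (R : realType) (k n : nat) (T : tensor R k n) (x : 'I_n -> R)
  (i : 'I_n) : R :=
  \sum_(g : {ffun 'I_k.-1 -> 'I_n}) T i g * \prod_(t : 'I_k.-1) x (g t).

Definition is_Heig (R : realType) (k n : nat) (T : tensor R k n) (l : R) : Prop :=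
  exists x : 'I_n -> R, (exists i, x i != 0) /\
    forall i, tapp T x i = l * x i ^+ k.-1.

Definition is_largest_Heig (R : realType) (k n : nat) (T : tensor R k n) (l : R)
  : Prop :=
  is_Heig T l /\ forall mu, is_Heig T mu -> mu <= l.

(* k-uniform s-cycle with m edges on Z_n, n = m(k-s); vertex label v is
   identified with v mod n;  e_j = {j(k-s)+1, ..., j(k-s)+k}. *)
Definition scyc_n (k s m : nat) : nat := (m * (k - s))%N.

Definition scyc_edge (k s m : nat) (j : nat) : {set 'I_(scyc_n k s m)} :=
  [set v : 'I_(scyc_n k s m) |
     [exists t : 'I_k, ((j * (k - s) + t.+1) %% scyc_n k s m)%N == v]].

Definition scyc_deg {k s m : nat} (v : 'I_(scyc_n k s m)) : nat :=
  #|[set j : 'I_m | v \in scyc_edge k s m j]|.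

Definition scyc_adj (R : realType) (k s m : nat) : tensor R k (scyc_n k s m) :=
  fun i g =>
    if [exists j : 'I_m, (i |: [set g t | t : 'I_k.-1]) == scyc_edge k s m j]
    then ((k.-1)`!%:R)^-1 else 0.

Definition scyc_degt (R : realType) (k s m : nat) : tensor R k (scyc_n k s m) :=
  fun i g => if [forall t, g t == i] then (scyc_deg i)%:R else 0.

Definition scyc_Q (R : realType) (k s m : nat) : tensor R k (scyc_n k s m) :=
  fun i g => @scyc_degt R k s m i g + @scyc_adj R k s m i g.

Definition scyc_L (R : realType) (k s m : nat) : tensor R k (scyc_n k s m) :=
  fun i g => @scyc_degt R k s m i g - @scyc_adj R k s m i g.

From HB Require Import structures.
From mathcomp Require Import all_boot all_order all_algebra.
From mathcomp Require Import reals zify ring.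
Import Order.TTheory GRing.Theory Num.Theory.

(* Let d = k - s and cut the vertex cycle into m blocks of d consecutive vertices.
   Give weight 1 to the first r positions of every block and weight a elsewhere,
   a being the root in (0,1).  An edge consists of q full blocks followed by the
   first r positions of the next one, so a vertex at a position below r lies in
   q + 1 edges, any other vertex in q, and the weights of every edge multiply to
   a^(k-(q+1)r).  The root equation is exactly what makes this positive vector an
   eigenvector of Q for q + 1 + (q + 1) a^(k-(q+1)r).  For even k, negating the
   weights at one position, met an odd number of times by every edge, gives an
   eigenvector of L for the same value.  As |Q| and |L| are entrywise bounded by
   Q, the Collatz-Wielandt argument for the positive eigenvector of Q shows that
   no H-eigenvalue of Q or L is larger. *)

Section TensorBound.
Local Open Scope ring_scope.
Variables (R : realType) (k n : nat).
Implicit Types (T Q : tensor R k n) (x y : 'I_n -> R).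

Lemma tappD T Q x i :
  tapp (fun i g => T i g + Q i g) x i = tapp T x i + tapp Q x i.
Proof. by rewrite /tapp -big_split; apply: eq_bigr => g _; rewrite mulrDl. Qed.

Lemma tappB T Q x i :
  tapp (fun i g => T i g - Q i g) x i = tapp T x i - tapp Q x i.
Proof. by rewrite /tapp -sumrB; apply: eq_bigr => g _; rewrite mulrBl. Qed.

Lemma norm_tapp_le T Q x i : (forall g, `|T i g| <= Q i g) ->
  `|tapp T x i| <= tapp Q (fun v => `|x v|) i.
Proof.
move=> hTQ; rewrite /tapp; apply: le_trans (ler_norm_sum _ _ _) _.
apply: ler_sum => g _; rewrite normrM normr_prod.
by apply: ler_wpM2r => //; apply: prodr_ge0.
Qed.

Lemma tapp_le_scale Q x y i (c : R) : (forall g, 0 <= Q i g) ->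
  (forall v, 0 <= x v <= c * y v) -> tapp Q x i <= c ^+ k.-1 * tapp Q y i.
Proof.
move=> hQ hxy; rewrite /tapp mulr_sumr; apply: ler_sum => g _.
rewrite mulrCA; apply: ler_wpM2l => //.
have -> : c ^+ k.-1 * \prod_(t < k.-1) y (g t) = \prod_(t < k.-1) (c * y (g t)).
  by rewrite big_split /= prodr_const card_ord.
by apply: ler_prod => t _; apply: hxy.
Qed.

(* Collatz-Wielandt: evaluate the eigenvalue equation of [T] at a vertex
   maximising [|x_v| / y_v]. *)
Lemma Heig_le_pos_eigenvector T Q rho y :
  (forall i g, `|T i g| <= Q i g) -> (forall v, 0 < y v) ->
  (forall i, tapp Q y i = rho * y i ^+ k.-1) ->
  forall mu, is_Heig T mu -> mu <= rho.
Proof.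
move=> hTQ hy hQy mu [x [[i0 hi0] hx]].
pose F v := `|x v| / y v.
have [j _ Fmax] := @arg_maxP _ R _ i0 predT F isT.
have Fj_gt0 : 0 < F j.
  by apply: lt_le_trans (Fmax i0 isT); rewrite divr_gt0 ?normr_gt0.
have xjE : `|x j| = F j * y j by rewrite /F divfK // gt_eqF.
have xj_gt0 : 0 < `|x j| by rewrite xjE; exact: mulr_gt0.
have Qj_ge0 g : 0 <= Q j g by exact: le_trans (normr_ge0 _) (hTQ j g).
have x_le v : 0 <= `|x v| <= F j * y v.
  by rewrite normr_ge0 -ler_pdivrMr //; apply: Fmax.
have : `|mu| * `|x j| ^+ k.-1 <= rho * `|x j| ^+ k.-1.
  rewrite -normrX -normrM -hx; apply: le_trans (norm_tapp_le T Q x j (hTQ j)) _.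
  apply: le_trans (tapp_le_scale Q (fun v => `|x v|) y j (F j) Qj_ge0 x_le) _.
  by rewrite hQy normrX; move: (F j) xjE => c ->; rewrite exprMn mulrCA.
rewrite ler_pM2r ?exprn_gt0 //.
exact: le_trans (ler_norm _).
Qed.

End TensorBound.

Section IndexImage.
Variables (k n : nat).
Local Notation img g := [set (g : {ffun 'I_k.-1 -> 'I_n}) t | t : 'I_k.-1].

Lemma card_img_le g : #|img g| <= k.-1.
Proof. by rewrite (leq_trans (leq_imset_card _ _)) ?card_ord. Qed.

Lemma setU1_img_eq (i : 'I_n) (E : {set 'I_n}) g : 0 < k -> i \in E -> #|E| = k ->
  (i |: img g == E) = (img g == E :\ i).
Proof.
move=> k_gt0 iE cardE; apply/eqP/eqP => [imgE|->]; last by rewrite setD1K.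
suff i_img : i \notin img g by rewrite -imgE setU1K.
have := cardsU1 i (img g); rewrite imgE cardE.
by have := card_img_le g; case: (i \in img g) => /=; lia.
Qed.

Lemma img_eqE g (S : {set 'I_n}) : #|S| = k.-1 ->
  (img g == S) = (g \in ffun_on (mem S)) && injectiveb g.
Proof.
move=> cardS; apply/eqP/andP => [imgE|[/ffun_onP g_on /injectiveP g_inj]].
  split; first by apply/ffun_onP => t; rewrite -imgE imset_f.
  have : #|img g| == #|'I_k.-1| by rewrite imgE cardS card_ord.
  by move/imset_injP => g_inj; apply/injectiveP => t1 t2; apply: g_inj.
apply/eqP; rewrite eqEcard cardS card_imset ?card_ord ?leqnn ?andbT //.
by apply/subsetP => v /imsetP [t _ ->]; apply: g_on.
Qed.

Lemma card_img_eq (S : {set 'I_n}) : #|S| = k.-1 ->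
  #|[set g : {ffun 'I_k.-1 -> 'I_n} | img g == S]| = (k.-1)`!.
Proof.
move=> cardS; rewrite -ffactnn.
have := card_inj_ffuns_on 'I_k.-1 (mem S).
rewrite card_ord (_ : #|mem S| = k.-1) // => <-.
by apply: eq_card => g; rewrite !inE img_eqE.
Qed.

Lemma prod_img_eq (R : comNzRingType) (x : 'I_n -> R) g (S : {set 'I_n}) :
  #|S| = k.-1 -> img g == S ->
  (\prod_(t : 'I_k.-1) x (g t) = \prod_(v in S) x v)%R.
Proof.
move=> cardS imgE; move: (imgE); rewrite img_eqE // => /andP [_ /injectiveP g_inj].
by rewrite -(eqP imgE) big_imset //; apply: in2W.
Qed.

End IndexImage.

Lemma scyc_adj_ge0 (R : realType) k s m i g : (0 <= @scyc_adj R k s m i g)%R.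
Proof. by rewrite /scyc_adj; case: ifP => // _; rewrite invr_ge0. Qed.

Lemma scyc_degt_ge0 (R : realType) k s m i g : (0 <= @scyc_degt R k s m i g)%R.
Proof. by rewrite /scyc_degt; case: ifP. Qed.

Lemma tapp_scyc_degt (R : realType) k s m (x : 'I_(scyc_n k s m) -> R) i :
  tapp (@scyc_degt R k s m) x i = ((scyc_deg i)%:R * x i ^+ k.-1)%R.
Proof.
rewrite /tapp /scyc_degt (bigD1 [ffun => i]) //= [X in (_ + X)%R]big1 ?addr0.
  rewrite ifT; last by apply/forallP => t; rewrite ffunE.
  by rewrite (eq_bigr (fun _ => x i)) ?prodr_const ?card_ord // => t _; rewrite ffunE.
move=> g g_ne; rewrite ifF ?mul0r //; apply/negbTE; apply: contra g_ne => /forallP g_i.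
by apply/eqP/ffunP => t; rewrite ffunE; apply/eqP.
Qed.

Lemma prod_modn_blocks (R : comNzRingType) (F : nat -> R) d q r : r <= d ->
  (\prod_(t < q * d + r) F (t %% d)%N = (\prod_(t < d) F t) ^+ q * \prod_(t < r) F t)%R.
Proof.
move=> r_le; elim: q => [|q IHq].
  rewrite mul0n add0n expr0 mul1r; apply: eq_bigr => t _.
  by rewrite modn_small // (leq_trans (ltn_ord t)).
rewrite mulSn -addnA big_split_ord /= exprS -mulrA -IHq; congr (_ * _)%R.
  by apply: eq_bigr => t _; rewrite modn_small.
by apply: eq_bigr => t _; rewrite modnDl.
Qed.

Lemma modn_subK (m c j : nat) : c < m -> j < m -> (c + m - (c + m - j) %% m) %% m = j.
Proof.
move=> c_lt j_lt; case: (leqP j c) => [j_le|c_lt_j].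
  rewrite (_ : c + m - j = m + (c - j)); last by lia.
  rewrite modnDl (modn_small (_ : c - j < m)); last by lia.
  by rewrite (_ : c + m - (c - j) = m + j) ?modnDl ?modn_small //; lia.
rewrite (modn_small (_ : c + m - j < m)); last by lia.
by rewrite (_ : c + m - (c + m - j) = j) ?modn_small //; lia.
Qed.

Section SCycle.
Variables (k s m : nat).
Local Notation d := (k - s).
Local Notation n := (scyc_n k s m).
Local Notation e j := (scyc_edge k s m j).
Hypothesis d_gt0 : 0 < d.
Hypothesis k_lt_n : k < n.

Lemma scyc_n_gt0 : 0 < n. Proof. exact: leq_ltn_trans k_lt_n. Qed.

Lemma scyc_m_gt0 : 0 < m. Proof. by move: scyc_n_gt0; rewrite muln_gt0 => /andP []. Qed.

Lemma edge_start_lt (j : 'I_m) : j * d < n. Proof. by rewrite ltn_pmul2r. Qed.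

(* [(v - 1 - j d) mod n], written without truncated subtraction. *)
Definition edge_offset (v j : nat) := (v + (n - j * d) + n.-1) %% n.

Definition edge_vtx (j : nat) (t : 'I_k) : 'I_n :=
  Ordinal (ltn_pmod (j * d + t.+1) scyc_n_gt0).

Lemma scyc_edgeE j : e j = [set edge_vtx j t | t : 'I_k].
Proof.
apply/setP => v; rewrite !inE; apply/existsP/imsetP => [[t /eqP vE]|[t _ ->]].
  by exists t => //; apply: val_inj.
by exists t.
Qed.

Lemma edge_offset_vtx (j : 'I_m) (t : 'I_k) : edge_offset (edge_vtx j t) j = t.
Proof.
rewrite /edge_offset /= -addnA modnDml; have := ltnW (edge_start_lt j).
move: (j * d) => J J_le; rewrite (_ : J + t.+1 + (n - J + n.-1) = 2 * n + t).
  by rewrite modnMDl modn_small // (ltn_trans (ltn_ord t)).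
by have := scyc_n_gt0; lia.
Qed.

Lemma mem_scyc_edge (j : 'I_m) (v : 'I_n) : (v \in e j) = (edge_offset v j < k).
Proof.
rewrite scyc_edgeE; apply/imsetP/idP => [[t _ ->]|off_lt].
  by rewrite edge_offset_vtx.
exists (Ordinal off_lt) => //; apply: val_inj => /=.
rewrite /edge_offset addnS -addSn modnDmr; have := ltnW (edge_start_lt j).
move: (j * d) => J J_le; rewrite (_ : J.+1 + (v + (n - J) + n.-1) = 2 * n + v).
  by rewrite modnMDl modn_small.
by have := scyc_n_gt0; lia.
Qed.

Lemma edge_vtx_inj (j : 'I_m) : injective (edge_vtx j).
Proof.
move=> t1 t2 vE; apply: ord_inj.
by rewrite -(edge_offset_vtx j t1) -(edge_offset_vtx j t2) vE.
Qed.

Lemma card_scyc_edge (j : 'I_m) : #|e j| = k.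
Proof. by rewrite scyc_edgeE card_imset ?card_ord //; apply: edge_vtx_inj. Qed.

(* For [j < j'], the set [e j'] cannot contain the first vertex [j d + 1] of
   [e j] while missing its predecessor [j d]. *)
Lemma scyc_edge_inj : injective (fun j : 'I_m => e j).
Proof.
suff lt_neq (j j' : 'I_m) : j < j' -> e j != e j'.
  by move=> j j' eq_e; case: (ltngtP j j') => [/lt_neq|/lt_neq|/val_inj];
    rewrite ?eq_e ?eqxx.
move=> lt_jj'; apply/negP => /eqP eq_e.
have k_gt0 : 0 < k by lia.
have J_lt := edge_start_lt j; have J'_lt := edge_start_lt j'.
have lt_JJ' : j * d < j' * d by rewrite ltn_pmul2r.
have first_in := mem_scyc_edge j' (edge_vtx j (Ordinal k_gt0)).
rewrite -eq_e (mem_scyc_edge j) edge_offset_vtx k_gt0 /edge_offset /= in first_in.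
have pred_in := mem_scyc_edge j' (Ordinal J_lt).
rewrite -eq_e (mem_scyc_edge j) /edge_offset /= in pred_in.
have n_gt0 := scyc_n_gt0.
move: (j * d) (j' * d) J_lt J'_lt lt_JJ' first_in pred_in.
move=> J J' ? ? ? first_in pred_in.
rewrite -addnA modnDml in first_in.
rewrite (_ : J + 1 + (n - J' + n.-1) = 1 * n + (n - (J' - J))) in first_in; last by lia.
rewrite (_ : J + (n - J) + n.-1 = 1 * n + n.-1) in pred_in; last by lia.
rewrite (_ : J + (n - J') + n.-1 = 1 * n + (n - (J' - J) - 1)) in pred_in; last by lia.
rewrite !modnMDl !modn_small in first_in pred_in; lia.
Qed.

(* Vertex [v] is the [(u+1)]-th one, [u = (v - 1) mod n]; it sits at position
   [u mod d] of block [u / d] among the [m] blocks of [d] consecutive vertices. *)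
Definition vtx_shift (v : nat) := (v + n.-1) %% n.
Definition block_pos (v : nat) := vtx_shift v %% d.

Lemma block_pos_lt v : block_pos v < d. Proof. exact: ltn_pmod. Qed.

Lemma block_pos_edge_vtx j t : block_pos (edge_vtx j t) = t %% d.
Proof.
rewrite /block_pos /vtx_shift /= modnDml (modn_dvdm _ (dvdn_mull m (dvdnn d))).
rewrite (_ : j * d + t.+1 + n.-1 = (j + m) * d + t) ?modnMDl //.
by rewrite mulnDl; have := scyc_n_gt0; rewrite /scyc_n; lia.
Qed.

Lemma modn_block b p : p < d -> (b * d + p) %% n = (b %% m) * d + p.
Proof.
move=> p_lt; rewrite {1}(divn_eq b m) mulnDl -mulnA -addnA modnMDl modn_small //.
have : (b %% m).+1 * d <= m * d by rewrite leq_mul2r ltn_pmod ?scyc_m_gt0 ?orbT.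
by rewrite /scyc_n mulSn; lia.
Qed.

Lemma mem_scyc_edge_block (j : 'I_m) (v : 'I_n) : (v \in e j) =
  (((vtx_shift v %/ d + m - j) %% m) * d + block_pos v < k).
Proof.
rewrite mem_scyc_edge /edge_offset /block_pos -[v + _ + _]addnAC -modnDml.
have u_lt : vtx_shift v < n by apply: ltn_pmod scyc_n_gt0.
have b_lt : vtx_shift v %/ d < m by rewrite ltn_divLR.
have J_le : j * d <= m * d by rewrite leq_mul2r ltnW ?orbT.
rewrite -/(vtx_shift v) -modn_block ?ltn_pmod //; congr (_ %% _ < _).
rewrite mulnBl mulnDl {1}(divn_eq (vtx_shift v) d).
by move: J_le (vtx_shift v %/ d * d) (vtx_shift v %% d); rewrite /scyc_n; lia.
Qed.

Lemma sum_block_lt q r p : p < d -> r < d -> q < m ->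
  \sum_(b < m) ((b * d + p < q * d + r) : nat) = q + (p < r).
Proof.
move=> p_lt r_lt q_lt; pose f b : nat := b * d + p < q * d + r.
have low : \sum_(0 <= b < q) f b = q.
  rewrite (eq_big_nat _ _ (F2 := fun=> 1)) ?sum_nat_const_nat ?subn0 ?muln1 //.
  move=> b /andP [_ b_lt]; have : b.+1 * d <= q * d by rewrite leq_mul2r b_lt orbT.
  by rewrite /f mulSn => ?; apply/eqP; rewrite eqb1; lia.
have high : \sum_(q.+1 <= b < m) f b = 0.
  rewrite big_nat_cond big1 // => b /andP [/andP [b_gt _] _].
  have : q.+1 * d <= b * d by rewrite leq_mul2r b_gt orbT.
  by rewrite /f mulSn => ?; apply/eqP; rewrite eqb0; lia.
rewrite -(big_mkord xpredT f) (big_cat_nat (leq0n q) (ltnW q_lt)).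
rewrite (big_cat_nat (leqnSn q) q_lt) big_nat1 low high /=.
by rewrite addn0 /f ltn_add2l.
Qed.

Lemma scyc_deg_block q r (v : 'I_n) : k = q * d + r -> r < d ->
  scyc_deg v = q + (block_pos v < r).
Proof.
move=> kE r_lt; rewrite /scyc_deg -sum1dep_card big_mkcond /=.
have q_lt : q < m.
  rewrite -(ltn_pmul2r d_gt0) -/(scyc_n k s m); apply: leq_ltn_trans k_lt_n.
  by rewrite [X in _ <= X]kE leq_addr.
set b := vtx_shift v %/ d.
have b_lt : b < m by rewrite ltn_divLR // ltn_pmod ?scyc_n_gt0.
pose refl (j : 'I_m) : 'I_m := Ordinal (ltn_pmod (b + m - j) scyc_m_gt0).
have reflK : involutive refl by move=> j; apply: val_inj; rewrite /= modn_subK.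
rewrite -(@sum_block_lt q r _ (block_pos_lt v) r_lt q_lt) (reindex_inj (inv_inj reflK)).
apply: eq_bigr => j _; rewrite mem_scyc_edge_block -/b.
have -> : (b + m - refl j) %% m = j by rewrite /refl /= modn_subK.
by rewrite -kE; case: (_ < _).
Qed.

Local Notation img g := [set (g : {ffun 'I_k.-1 -> 'I_n}) t | t : 'I_k.-1].

Lemma card_scyc_edgeD1 (j : 'I_m) i : i \in e j -> #|e j :\ i| = k.-1.
Proof. by move=> ij; have := cardsD1 i (e j); rewrite ij card_scyc_edge; lia. Qed.

Local Open Scope ring_scope.

(* Each edge through [i] is matched by the [(k-1)!] enumerations of its other
   vertices, which cancel the normalising factor of the adjacency tensor. *)
Lemma tapp_scyc_adj (R : realType) (x : 'I_n -> R) (i : 'I_n) :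
  tapp (@scyc_adj R k s m) x i =
  \sum_(j : 'I_m | i \in e j) \prod_(v in e j :\ i) x v.
Proof.
rewrite /tapp /scyc_adj; have k_gt0 : (0 < k)%N by lia.
set c : R := ((k.-1)`!%:R)^-1.
have U1E (j : 'I_m) g : i \in e j -> (i |: img g == e j) = (img g == e j :\ i).
  by move=> ij; apply: setU1_img_eq; rewrite ?card_scyc_edge.
have termE g :
  (if [exists j : 'I_m, (i |: img g) == e j] then c else 0) * \prod_(t < k.-1) x (g t)
  = \sum_(j : 'I_m | i \in e j)
      (if img g == e j :\ i then c * \prod_(v in e j :\ i) x v else 0).
  case: existsP => [[j0 /eqP j0E] | no_edge]; last first.
    rewrite mul0r big1 // => j ij; case: ifP => // imgE; case: no_edge.
    by exists j; rewrite U1E.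
  have ij0 : i \in e j0 by rewrite -j0E setU11.
  rewrite (bigD1 j0) //= -U1E // j0E eqxx [X in _ + X]big1 ?addr0.
    congr (_ * _); apply: prod_img_eq; first exact: card_scyc_edgeD1.
    by rewrite -U1E // j0E.
  move=> j /andP [ij j_ne]; case: ifP => // imgE; move: imgE j_ne.
  by rewrite -U1E // j0E => /eqP /scyc_edge_inj ->; rewrite eqxx.
rewrite (eq_bigr _ (fun g _ => termE g)) exchange_big /=; apply: eq_bigr => j ij.
rewrite -big_mkcond /= sumr_const.
rewrite (_ : #|_| = (k.-1)`!); last first.
  rewrite -(@card_img_eq k n _ (card_scyc_edgeD1 j i ij)).
  by apply: eq_card => g; rewrite inE.
by rewrite -mulr_natr mulrAC mulVf ?mul1r // pnatr_eq0 -lt0n fact_gt0.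
Qed.

Lemma prod_scyc_edge_pos (R : comNzRingType) (F : nat -> R) (j : 'I_m) :
  \prod_(v in e j) F (block_pos v) = \prod_(t < k) F (t %% d)%N.
Proof.
rewrite scyc_edgeE big_imset /=; last by move=> t1 t2 _ _; apply: edge_vtx_inj.
by apply: eq_bigr => t _; rewrite block_pos_edge_vtx.
Qed.

Lemma tapp_scyc_adj_pos (R : realType) (F : nat -> R) (i : 'I_n) :
  F (block_pos i) != 0 ->
  tapp (@scyc_adj R k s m) (fun v => F (block_pos v)) i =
  (scyc_deg i)%:R * (\prod_(t < k) F (t %% d)%N / F (block_pos i)).
Proof.
move=> Fi_neq0; rewrite tapp_scyc_adj.
rewrite (eq_bigr (fun _ => \prod_(t < k) F (t %% d)%N / F (block_pos i))); last first.
  move=> j ij; rewrite -(prod_scyc_edge_pos _ F j) (big_setD1 _ ij) /=.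
  by rewrite [F _ * _]mulrC mulfK.
rewrite sumr_const mulr_natl /scyc_deg; congr (_ *+ _).
by apply: eq_card => j; rewrite inE.
Qed.

Section Eigenvector.
Variables (R : realType) (q r : nat) (a : R).
Hypothesis kE : k = (q * d + r)%N.
Hypothesis r_lt : (r < d)%N.
Hypothesis a_gt0 : 0 < a.
Hypothesis a_root : q.+1%:R * a ^+ k + a ^+ (q.+1 * r) - q%:R = 0.

Definition weight (p : nat) : R := if (p < r)%N then 1 else a.
Definition rho : R := q.+1%:R + q.+1%:R * a ^+ (k - q.+1 * r).

Lemma weight_gt0 p : 0 < weight p. Proof. by rewrite /weight; case: ifP. Qed.

Lemma qr_le_k : (q.+1 * r <= k)%N.
Proof.
have : (q * r <= q * d)%N by rewrite leq_mul2l ltnW ?orbT.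
by rewrite mulSn kE; lia.
Qed.

Lemma prod_weight : \prod_(t < k) weight (t %% d)%N = a ^+ (k - q.+1 * r).
Proof.
have := prod_modn_blocks _ weight _ q _ (ltnW r_lt); rewrite -kE => ->.
rewrite [X in _ * X]big1 ?mulr1 => [|t _]; last by rewrite /weight ltn_ord.
rewrite -(big_mkord xpredT weight) (big_cat_nat (leq0n r) (ltnW r_lt)) /=.
rewrite big_nat_cond big1 ?mul1r => [|t /andP [/andP [_ t_lt] _]]; last first.
  by rewrite /weight t_lt.
rewrite (eq_big_nat _ _ (F2 := fun=> a)) => [|t /andP [t_ge _]]; last first.
  by rewrite /weight ltnNge t_ge.
rewrite prodr_const_nat -exprM; congr (_ ^+ _).
have : (q * r <= q * d)%N by rewrite leq_mul2l ltnW ?orbT.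
by rewrite mulnBl kE mulSn (mulnC r q) (mulnC _ q); lia.
Qed.

(* The root equation, multiplied by [a ^+ (k - q.+1 * r)], is the eigenvalue
   equation at a vertex of weight [a]. *)
Lemma root_eigen_identity :
  q%:R * a ^+ k + q%:R * a ^+ (k - q.+1 * r) = rho * a ^+ k.
Proof.
have ak : a ^+ k = a ^+ (k - q.+1 * r) * a ^+ (q.+1 * r).
  by rewrite -exprD subnK ?qr_le_k.
move: a_root; rewrite /rho ak -addn1 natrD.
move: (a ^+ (k - _)) (a ^+ (q.+1 * r)) (q%:R : R) => P B Q rootE.
apply/eqP; rewrite -subr_eq0 -oppr_eq0 -(mulr0 P) -rootE; apply/eqP; ring.
Qed.

Lemma scyc_Q_weight_eigen i :
  tapp (@scyc_Q R k s m) (fun v => weight (block_pos v)) i =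
  rho * weight (block_pos i) ^+ k.-1.
Proof.
rewrite tappD tapp_scyc_degt tapp_scyc_adj_pos ?gt_eqF ?weight_gt0 // prod_weight.
rewrite (scyc_deg_block q r i kE r_lt) /weight /rho.
case: ltnP => _; first by rewrite addn1 expr1n invr1 !mulr1.
have k_gt0 : (0 < k)%N by lia.
apply: (mulIf (lt0r_neq0 a_gt0)).
rewrite addn0 mulrDl -!mulrA -exprSr prednK // mulVf ?gt_eqF // mulr1.
exact: root_eigen_identity.
Qed.

(* Position [neg_pos] occurs [q + (neg_pos < r)] times in every edge, an odd
   number; negating the weights there makes every edge product negative. *)
Definition neg_pos : nat := if odd q then r else 0.
Definition sign (p : nat) : R := if p == neg_pos then -1 else 1.
Definition signed_weight (p : nat) : R := sign p * weight p.

Lemma signed_weight_neq0 p : signed_weight p != 0.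
Proof.
apply: mulf_neq0; last by rewrite gt_eqF ?weight_gt0.
by rewrite /sign; case: ifP; rewrite ?oppr_eq0 oner_eq0.
Qed.

Lemma prod_sign (r_gt0 : (0 < r)%N) : \prod_(t < k) sign (t %% d)%N = -1.
Proof.
have := prod_modn_blocks _ sign _ q _ (ltnW r_lt); rewrite -kE => ->.
have neg_lt : (neg_pos < d)%N by rewrite /neg_pos; case: ifP.
have prod_at (N : nat) (p : 'I_N) : val p = neg_pos -> \prod_(t < N) sign t = -1.
  move=> pE; rewrite (bigD1 p) //= /sign pE eqxx big1 ?mulr1 // => t t_ne.
  by rewrite ifF //; apply: contraNF t_ne => /eqP tE; apply/eqP/val_inj; rewrite /= tE.
rewrite (prod_at _ (Ordinal neg_lt)) //; case q_odd: (odd q).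
  rewrite big1 ?mulr1 => [|t _]; last by rewrite /sign /neg_pos q_odd ifF // ltn_eqF.
  by rewrite -signr_odd q_odd.
by rewrite (prod_at _ (Ordinal r_gt0)) /neg_pos ?q_odd // -signr_odd q_odd mul1r.
Qed.

Lemma scyc_L_signed_eigen (r_gt0 : (0 < r)%N) (k_even : ~~ odd k) i :
  tapp (@scyc_L R k s m) (fun v => signed_weight (block_pos v)) i =
  rho * signed_weight (block_pos i) ^+ k.-1.
Proof.
have k_gt0 : (0 < k)%N by lia.
have prod_sw :
    \prod_(t < k) signed_weight (t %% d)%N = - \prod_(t < k) weight (t %% d)%N.
  by rewrite big_split /= prod_sign // mulN1r.
have := scyc_Q_weight_eigen i.
rewrite tappD tapp_scyc_degt tapp_scyc_adj_pos ?gt_eqF ?weight_gt0 // => Q_eigen.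
rewrite tappB tapp_scyc_degt tapp_scyc_adj_pos ?signed_weight_neq0 //.
rewrite prod_sw /signed_weight.
have : odd k.-1 by rewrite -[odd _]negbK -oddS prednK.
rewrite /sign; case: ifP => _ k1_odd; last by rewrite !mul1r mulNr mulrN opprK.
rewrite !mulN1r exprNn -signr_odd k1_odd expr1 !mulN1r invrN mulrNN.
by rewrite mulrN -opprD Q_eigen mulrN.
Qed.

Lemma scyc_Q_largest : is_largest_Heig (@scyc_Q R k s m) rho.
Proof.
have eigen := scyc_Q_weight_eigen.
split.
  exists (fun v => weight (block_pos v)); split => //.
  by exists (Ordinal scyc_n_gt0); rewrite gt_eqF ?weight_gt0.
apply: (@Heig_le_pos_eigenvector R k n _ _ rho _ _ _ eigen) => [i g | v].
  by rewrite ger0_norm ?addr_ge0 ?scyc_adj_ge0 ?scyc_degt_ge0.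
exact: weight_gt0.
Qed.

Lemma scyc_L_largest (r_gt0 : (0 < r)%N) (k_even : ~~ odd k) :
  is_largest_Heig (@scyc_L R k s m) rho.
Proof.
split.
  exists (fun v => signed_weight (block_pos v)); split.
    by exists (Ordinal scyc_n_gt0); apply: signed_weight_neq0.
  exact: scyc_L_signed_eigen.
apply: (@Heig_le_pos_eigenvector R k n _ _ rho _ _ _ scyc_Q_weight_eigen) => [i g | v].
  apply: le_trans (ler_normB _ _) _.
  by rewrite !ger0_norm ?scyc_adj_ge0 ?scyc_degt_ge0.
exact: weight_gt0.
Qed.

End Eigenvector.
End SCycle.

Local Open Scope ring_scope.

Lemma exists_unique_root01 (R : realType) (k q r : nat) :
  (0 < k)%N -> (0 < r)%N -> (0 < q)%N ->
  exists! a : R, 0 < a < 1 /\ q.+1%:R * a ^+ k + a ^+ (q.+1 * r) - q%:R = 0.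
Proof.
move=> k_gt0 r_gt0 q_gt0.
pose f (a : R) := q.+1%:R * a ^+ k + a ^+ (q.+1 * r) - q%:R.
have qr_gt0 : (0 < q.+1 * r)%N by rewrite muln_gt0.
have f0 : f 0 = - q%:R by rewrite /f !expr0n !eqn0Ngt k_gt0 qr_gt0 mulr0 !add0r.
have f1 : f 1 = 2%:R by rewrite /f !expr1n mulr1 -addn1 natrD; ring.
have f_lt a b : 0 <= a -> a < b -> f a < f b.
  move=> a_ge0 ab; rewrite /f ltrD2r ltrD // ?ltr_pM2l ?ltr0n //;
    by rewrite ltrXn2r -?lt0n.
pose p : {poly R} := q.+1%:R%:P * 'X^k + 'X^(q.+1 * r) - q%:R%:P.
have pE a : p.[a] = f a by rewrite /p /f !hornerE.
have [x /andP [x_ge0 x_le1] /rootP] : exists2 x, 0 <= x <= 1 & root p x.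
  by apply: poly_ivt; rewrite ?ler01 // !pE f0 f1 oppr_le0 ler0n ler0n.
rewrite pE => fx0.
have x_neq0 : x != 0.
  by apply: contra_eq_neq fx0 => ->; rewrite f0 oppr_eq0 pnatr_eq0 -lt0n.
have x_neq1 : x != 1 by apply: contra_eq_neq fx0 => ->; rewrite f1 pnatr_eq0.
exists x; split; first by rewrite !lt_neqAle eq_sym x_neq0 x_neq1 x_ge0 x_le1.
move=> y [/andP [y_gt0 _] fy0]; rewrite -/(f y) in fy0; case: (ltgtP x y) => [xy|yx|//].
  by have := f_lt _ _ x_ge0 xy; rewrite fx0 fy0 ltxx.
by have := f_lt _ _ (ltW y_gt0) yx; rewrite fx0 fy0 ltxx.
Qed.

Theorem theorem5p2 (R : realType) (k s m q r : nat) :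
  (3 <= k)%N -> (k < 2 * s)%N -> (s < k.-1)%N ->
  (2 * k - s <= scyc_n k s m)%N ->
  k = (q * (k - s) + r)%N -> (1 <= r)%N -> (r < k - s)%N ->
  (exists! a : R, 0 < a < 1 /\
      q.+1%:R * a ^+ k + a ^+ (q.+1 * r) - q%:R = 0) /\
  (forall a : R, 0 < a < 1 ->
      q.+1%:R * a ^+ k + a ^+ (q.+1 * r) - q%:R = 0 ->
      is_largest_Heig (@scyc_Q R k s m)
        (q.+1%:R + q.+1%:R * a ^+ (k - q.+1 * r)) /\
      (~~ odd k -> is_largest_Heig (@scyc_L R k s m)
        (q.+1%:R + q.+1%:R * a ^+ (k - q.+1 * r)))).
Proof.
move=> k_ge3 k_lt_2s s_lt n_ge kE r_gt0 r_lt.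
have d_gt0 : (0 < k - s)%N by lia.
have k_lt_n : (k < scyc_n k s m)%N by lia.
have q_gt0 : (0 < q)%N by case: q kE => [|//] kE; lia.
split; first by apply: exists_unique_root01; lia.
move=> a /andP [a_gt0 _] a_root; split; first exact: scyc_Q_largest.
exact: scyc_L_largest.
Qed.
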